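(* Let $\mathcal H_X,\mathcal H_Y$ be finite-dimensional Hilbert spaces with $\dim\mathcal H_X\ge2$, let $\rho$ be a state on $\mathcal H_X\otimes\mathcal H_Y$, and let $\ket{\alpha_0},\ket{\alpha_1}\in\mathcal H_X$ be orthonormal. Define the operators on $\mathcal H_Y$ $$A=\bra{\alpha_0}\rho\ket{\alpha_0},\qquad B=\bra{\alpha_0}\rho\ket{\alpha_1},\qquad D=\bra{\alpha_1}\rho\ket{\alpha_1}$$ (partial matrix elements on the $X$ factor). Assume that $A\neq0$, $\operatorname{Ker}A\neq\{0\}$, and $P_{\operatorname{supp}A}\,B\,P_{\operatorname{Ker}A}\neq0$, where $P_{\operatorname{supp}A}$ and $P_{\operatorname{Ker}A}$ are the orthogonal projectors onto the support (range) and the kernel of $A$. Then $\rho$ is NPT across the cut $X|Y$ (its partial transpose with respect to $Y$ is not positive semidefinite), and the projective assemblage generated by projective measurements on $X$ admits no local hidden state model; hence $\rho$ is projectively steerable from $X$ to $Y$.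
   Context: For a bipartite state $\rho$ on $\mathcal H_X\otimes\mathcal H_Y$, the projective assemblage from $X$ to $Y$ consists of the unnormalized conditional states $\sigma_{a|M}=\operatorname{tr}_X[(\Pi_a\otimes I_Y)\rho]$ for all projective measurements $M=\{\Pi_a\}$ on $\mathcal H_X$. It admits a local hidden state (LHS) model if there exist a probability space $(\Lambda,\mu)$, density matrices $\tau_\lambda$ on $\mathcal H_Y$ (measurable in $\lambda$) and response functions $p(a|M,\lambda)\ge0$ with $\sum_a p(a|M,\lambda)=1$ such that $\sigma_{a|M}=\int_\Lambda p(a|M,\lambda)\tau_\lambda\,d\mu(\lambda)$ for all $M$ and $a$. The state is projectively steerable from $X$ to $Y$ if no such model exists. NPT means the partial transpose (with respect to any fixed basis of $\mathcal H_Y$) is not positive semidefinite. *)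

From HB Require Import structures.
From mathcomp Require Import all_boot all_order all_algebra.
From mathcomp Require Import all_classical all_reals all_analysis.
From mathcomp Require Import complex.

Set Implicit Arguments.
Unset Strict Implicit.
Unset Printing Implicit Defensive.

Import Order.TTheory GRing.Theory Num.Theory.
Local Open Scope ring_scope.

(* Hilbert spaces: H_X = C^m, H_Y = C^n; operators act on column vectors.
   H_X (x) H_Y = C^(m*n), the basis vector |i> (x) |k> having index
   mxvec_index i k. *)

Section QDefs.
Variable R : realType.
Local Notation C := (R[i]).

Definition adj (p q : nat) (A : 'M[C]_(p, q)) : 'M[C]_(q, p) :=
  map_mx Num.conj A^T.

Definition psd (N : nat) (A : 'M[C]_N) : Prop :=
  forall v : 'cV[C]_N, 0 <= (adj v *m A *m v) 0 0.

Definition density (N : nat) (A : 'M[C]_N) : Prop :=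
  psd A /\ \tr A = 1.

Definition orthonormal2 (m : nat) (a0 a1 : 'cV[C]_m) : Prop :=
  adj a0 *m a0 = 1%:M /\ adj a1 *m a1 = 1%:M /\ adj a0 *m a1 = 0.

(* partial matrix element  <a| rho |b>  on the X factor: an operator on H_Y *)
Definition pmel (m n : nat) (a b : 'cV[C]_m) (rho : 'M[C]_(m * n)) : 'M[C]_n :=
  \matrix_(k, l) \sum_(i < m) \sum_(j < m)
     Num.conj (a i 0) * rho (mxvec_index i k) (mxvec_index j l) * b j 0.

Definition range_of (n : nat) (A : 'M[C]_n) (v : 'cV[C]_n) : Prop :=
  exists w : 'cV[C]_n, v = A *m w.
Definition ker_of (n : nat) (A : 'M[C]_n) (v : 'cV[C]_n) : Prop :=
  A *m v = 0.

Definition orth_proj_onto (n : nat) (P : 'M[C]_n) (S : 'cV[C]_n -> Prop) : Prop :=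
  P *m P = P /\ adj P = P /\ (forall v, S v <-> P *m v = v).

(* partial transpose with respect to Y:
   (rho^{T_Y})_{(i,k),(j,l)} = rho_{(i,l),(j,k)} *)
Definition ptransY (m n : nat) (rho : 'M[C]_(m * n)) : 'M[C]_(m * n) :=
  \sum_(i < m) \sum_(j < m) \sum_(k < n) \sum_(l < n)
     rho (mxvec_index i k) (mxvec_index j l)
       *: delta_mx (mxvec_index i l) (mxvec_index j k).

Definition NPT (m n : nat) (rho : 'M[C]_(m * n)) : Prop := ~ psd (ptransY rho).

Record PVM (m : nat) := {
  pvm_K : nat;
  pvm_Pi : 'I_pvm_K -> 'M[C]_m;
  pvm_herm : forall a, adj (pvm_Pi a) = pvm_Pi a;
  pvm_idem : forall a, pvm_Pi a *m pvm_Pi a = pvm_Pi a;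
  pvm_sum : \sum_(a < pvm_K) pvm_Pi a = 1%:M }.
Arguments pvm_Pi {m} p a.

(* sigma_{a|M} = tr_X[(Pi_a (x) I_Y) rho] *)
Definition assemblage (m n : nat) (rho : 'M[C]_(m * n)) (M : PVM m)
  (a : 'I_(pvm_K M)) : 'M[C]_n :=
  \matrix_(k, l) \sum_(i < m) \sum_(j < m)
     pvm_Pi M a i j * rho (mxvec_index j k) (mxvec_index i l).
Arguments assemblage {m n} rho M a.

(* local hidden state model for the projective assemblage; the integral of
   the matrix-valued function is taken entrywise (real and imaginary parts). *)
Definition has_LHS_model (m n : nat) (rho : 'M[C]_(m * n)) : Prop :=
  exists (d : measure_display) (L : measurableType d) (mu : probability L R)
         (tau : L -> 'M[C]_n) (p : forall M : PVM m, 'I_(pvm_K M) -> L -> R),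
    (forall x, density (tau x)) /\
    (forall k l, measurable_fun setT (fun x => complex.Re (tau x k l)) /\
                 measurable_fun setT (fun x => complex.Im (tau x k l))) /\
    (forall M a, measurable_fun setT (p M a)) /\
    (forall M a x, 0 <= p M a x) /\
    (forall M x, \sum_(a < pvm_K M) p M a x = 1) /\
    (forall M a k l,
        ((complex.Re (assemblage rho M a k l))%:E =
           (\int[mu]_x ((p M a x * complex.Re (tau x k l))%:E))%E) /\
        ((complex.Im (assemblage rho M a k l))%:E =
           (\int[mu]_x ((p M a x * complex.Im (tau x k l))%:E))%E)).

Definition proj_steerable (m n : nat) (rho : 'M[C]_(m * n)) : Prop :=
  ~ has_LHS_model rho.

End QDefs.

(* Pick v in Ker A with u := B v <> 0, which exists because P_supp A B P_Ker A <> 0.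
   As <a0 (x) v| rho |a0 (x) v> = <v|A|v> = 0 and rho >= 0, every matrix element of
   rho involving a0 (x) v vanishes.
   NPT: for w = (q + 1) a0 (x) conj v - b a1 (x) conj u, with b = <u|B|v> = |u|^2 > 0
   and q = <u|D|u>, one gets <w| rho^{T_Y} |w> = - b^2 (q + 2) < 0.
   Steering: measure X along beta = c a0 + s a1 with c^2 + s^2 = 1. The conditional
   state sigma = <beta| rho |beta> has Re <u|sigma|v> = c s b + O(s^2) but
   <v|sigma|v> = O(s^2). In an LHS model every hidden state obeys
   Re <u|tau|v> <= eta <u|tau|u> + <v|tau|v> / (4 eta); splitting the hidden variables
   according to the ratio <u|tau|u> / <v|tau|v> and using dominated convergence, any
   response-weighted average of Re <u|tau|v> is o(s) as soon as the corresponding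
   average of <v|tau|v> is O(s^2). This is a contradiction for small s. *)

From HB Require Import structures.
From mathcomp Require Import all_boot all_order all_algebra.
From mathcomp Require Import all_classical all_reals all_analysis.
From mathcomp Require Import complex.
From mathcomp Require Import ring lra.
Import Order.TTheory GRing.Theory Num.Theory.
Import numFieldNormedType.Exports.
Local Open Scope ring_scope.
Set Implicit Arguments.
Unset Strict Implicit.
Unset Printing Implicit Defensive.

Lemma le0_of_le_mul (R : realFieldType) (x c : R) :
  (forall eta : R, 0 < eta -> x <= eta * c) -> x <= 0.
Proof.
move=> h; have [c0|c0] := lerP c 0; first by rewrite (le_trans (h 1 ltr01)) ?mul1r.
have := h (x / (2 * c)); have -> : x / (2 * c) * c = x / 2 by field; rewrite gt_eqF.
case: (lerP x 0) => // x0; rewrite divr_gt0 ?mulr_gt0 //; lra.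
Qed.

Section Braket.
Variable R : realType.
Local Notation C := (R[i]).

Definition braket (N : nat) (M : 'M[C]_N) (a b : 'cV[C]_N) : C :=
  (adj a *m M *m b) 0 0.

Lemma adjmxD (p q : nat) (A B : 'M[C]_(p, q)) : adj (A + B) = adj A + adj B.
Proof. by apply/matrixP => i j; rewrite !mxE rmorphD. Qed.

Lemma adjmxN (p q : nat) (A : 'M[C]_(p, q)) : adj (- A) = - adj A.
Proof. by apply/matrixP => i j; rewrite !mxE rmorphN. Qed.

Lemma adjmxZ (p q : nat) (k : C) (A : 'M[C]_(p, q)) : adj (k *: A) = k^* *: adj A.
Proof. by apply/matrixP => i j; rewrite !mxE rmorphM. Qed.

Lemma adjmxM (p q r : nat) (A : 'M[C]_(p, q)) (B : 'M[C]_(q, r)) :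
  adj (A *m B) = adj B *m adj A.
Proof. by rewrite /adj trmx_mul map_mxM. Qed.

Lemma adjmxK (p q : nat) (A : 'M[C]_(p, q)) : adj (adj A) = A.
Proof. by apply/matrixP => i j; rewrite !mxE conjCK. Qed.

Lemma adjmx1 (p : nat) : adj (1%:M : 'M[C]_p) = 1%:M.
Proof. by rewrite /adj tr_scalar_mx map_scalar_mx rmorph1. Qed.

Variable N : nat.
Implicit Types (M : 'M[C]_N) (a b c : 'cV[C]_N).

Lemma braketDl M a b c : braket M (a + b) c = braket M a c + braket M b c.
Proof. by rewrite /braket adjmxD !mulmxDl mxE. Qed.

Lemma braketDr M a b c : braket M c (a + b) = braket M c a + braket M c b.
Proof. by rewrite /braket mulmxDr mxE. Qed.

Lemma braketZl M k a c : braket M (k *: a) c = k^* * braket M a c.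
Proof. by rewrite /braket adjmxZ -!scalemxAl mxE. Qed.

Lemma braketZr M k a c : braket M c (k *: a) = k * braket M c a.
Proof. by rewrite /braket -scalemxAr mxE. Qed.

Lemma braketE M a c :
  braket M a c = \sum_k \sum_l ((a k 0)^* * c l 0) * M k l.
Proof.
rewrite /braket mxE; under eq_bigr do rewrite mxE mulr_suml.
rewrite exchange_big; apply: eq_bigr => k _; apply: eq_bigr => l _.
by rewrite !mxE mulrAC.
Qed.

Lemma braket_summx I (r : seq I) (P : pred I) (F : I -> 'M[C]_N) a c :
  braket (\sum_(i <- r | P i) F i) a c = \sum_(i <- r | P i) braket (F i) a c.
Proof.
elim/big_rec2: _ => [|i y M _ <-]; first by rewrite /braket mulmx0 mul0mx mxE.
by rewrite /braket mulmxDr mulmxDl mxE.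
Qed.

Lemma braket_scalemx k M a c : braket (k *: M) a c = k * braket M a c.
Proof. by rewrite /braket -scalemxAr -scalemxAl mxE. Qed.

Lemma braket_delta_mx (I J : 'I_N) a c :
  braket (delta_mx I J) a c = (a I 0)^* * c J 0.
Proof.
rewrite /braket mxE (bigD1 J) //= big1 ?addr0; last first.
  move=> k /negbTE kJ.
  by rewrite mxE big1 ?mul0r // => l _; rewrite !mxE kJ andbF mulr0.
rewrite mxE (bigD1 I) //= big1 ?addr0; last first.
  by move=> l /negbTE lI; rewrite !mxE lI mulr0.
by rewrite !mxE !eqxx mulr1.
Qed.

Lemma braket_delta M k l : braket M (delta_mx k 0) (delta_mx l 0) = M k l.
Proof.
rewrite braketE (bigD1 k) //= [X in _ + X]big1 ?addr0; last first.
  by move=> i /negbTE ik; rewrite big1 // => j _; rewrite !mxE ik rmorph0 !mul0r.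
rewrite (bigD1 l) //= [X in _ + X]big1 ?addr0; last first.
  by move=> j /negbTE jl; rewrite !mxE jl mulr0 mul0r.
by rewrite !mxE !eqxx rmorph1 !mul1r.
Qed.

Lemma adj_mulmx_gt0 (w : 'cV[C]_N) : w != 0 -> 0 < (adj w *m w) 0 0.
Proof.
move=> wn0; have [k wk] : exists k, w k 0 != 0.
  apply/existsP; apply: contraR wn0; rewrite negb_exists => /forallP w0.
  by apply/eqP/matrixP => i j; rewrite (ord1 j) mxE; apply/eqP/negPn.
rewrite mxE (bigD1 k) //= ltr_pwDl //.
  by rewrite !mxE mulrC mul_conjC_gt0.
by apply: sumr_ge0 => i _; rewrite !mxE mulrC mul_conjC_ge0.
Qed.

Lemma psd_Re_braket_ge0 M a : psd M -> 0 <= complex.Re (braket M a a).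
Proof. by move=> /(_ a); rewrite lecE => /andP[]. Qed.

Lemma psd_braketC M a b : psd M -> braket M b a = (braket M a b)^*.
Proof.
move=> Mpsd; have h v : 0 <= braket M v v := Mpsd v.
have := h (a + b); have := h (a + 'i *: b); have := h a; have := h b.
rewrite !braketDl !braketDr !braketZl !braketZr.
case: (braket M a b) => x1 x2; case: (braket M b a) => y1 y2.
case: (braket M a a) => p1 p2; case: (braket M b b) => q1 q2.
rewrite !lecE /= => /andP[/eqP ? _] /andP[/eqP ? _] /andP[/eqP ? _] /andP[/eqP ? _].
apply/eqP; rewrite eq_complex /=; apply/andP; split; apply/eqP; lra.
Qed.

Lemma psd_Re_braket_le M a b (eta : R) : psd M -> 0 < eta ->
  complex.Re (braket M a b) <=
  eta * complex.Re (braket M a a) + complex.Re (braket M b b) / (4 * eta).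
Proof.
move=> Mpsd eta0; have := Mpsd ((2 * eta)%:C%C *: a + (-1) *: b).
rewrite -/(braket _ _ _) braketDl !braketDr !braketZl !braketZr.
rewrite (psd_braketC a b Mpsd).
case: (braket M a b) => x1 x2; case: (braket M a a) => p1 p2.
case: (braket M b b) => q1 q2; rewrite lecE /= => /andP[_ h].
rewrite -subr_ge0.
have -> : eta * p1 + q1 / (4 * eta) - x1 = (4 * eta)^-1 *
    ((2 * eta) * ((2 * eta) * p1) - (2 * eta) * x1 - (2 * eta) * x1 + q1).
  by field; rewrite gt_eqF.
apply: mulr_ge0; first by rewrite invr_ge0 mulr_ge0 // ltW.
by move: h; congr (_ <= _); ring.
Qed.

Lemma psd_braket_eq0 M a b : psd M -> braket M a a = 0 -> braket M b a = 0.
Proof.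
move=> Mpsd Maa; have Re_le0 b' : complex.Re (braket M b' a) <= 0.
  apply: (le0_of_le_mul (c := complex.Re (braket M b' b'))) => eta eta0.
  by have := psd_Re_braket_le b' a Mpsd eta0; rewrite Maa /= mul0r addr0.
have := Re_le0 b; have := Re_le0 ((-1) *: b).
have := Re_le0 ('i *: b); have := Re_le0 ((- 'i) *: b).
rewrite !braketZl; case: (braket M b a) => x y /= h1 h2 h3 h4.
by apply/eqP; rewrite eq_complex /=; apply/andP; split; apply/eqP; lra.
Qed.

End Braket.

Section Tensor.
Variable R : realType.
Local Notation C := (R[i]).
Variables m n : nat.

Definition tensv (a : 'cV[C]_m) (f : 'cV[C]_n) : 'cV[C]_(m * n) :=
  (mxvec (a *m f^T))^T.

Lemma tensvE a f i k : tensv a f (mxvec_index i k) 0 = a i 0 * f k 0.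
Proof. by rewrite /tensv mxE mxvecE mxE big_ord1 !mxE. Qed.

Lemma tensvDl a b f : tensv (a + b) f = tensv a f + tensv b f.
Proof.
apply/matrixP => I j; rewrite (ord1 j); case/mxvec_indexP: I => i k.
by rewrite [RHS]mxE !tensvE !mxE mulrDl.
Qed.

Lemma tensvZl k a f : tensv (k *: a) f = k *: tensv a f.
Proof.
apply/matrixP => I j; rewrite (ord1 j); case/mxvec_indexP: I => i l.
by rewrite [RHS]mxE !tensvE !mxE mulrA.
Qed.

Lemma sum_mxvec_index (F : 'I_(m * n) -> C) :
  \sum_I F I = \sum_i \sum_k F (mxvec_index i k).
Proof.
rewrite (reindex _ (curry_mxvec_bij _ _)) /= pair_bigA /=.
by apply: eq_bigr => -[i k].
Qed.

Lemma braket_tensv (rho : 'M[C]_(m * n)) a b f g :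
  braket rho (tensv a f) (tensv b g) = braket (pmel a b rho) f g.
Proof.
rewrite !braketE sum_mxvec_index.
under eq_bigr => i _ do under eq_bigr => k _ do rewrite sum_mxvec_index.
rewrite exchange_big /=; apply: eq_bigr => k _.
under [RHS]eq_bigr => l _ do rewrite mxE mulr_sumr.
rewrite [RHS]exchange_big /=; apply: eq_bigr => i _.
under [RHS]eq_bigr => l _ do rewrite mulr_sumr.
rewrite [RHS]exchange_big /=; apply: eq_bigr => j _; apply: eq_bigr => l _.
by rewrite !tensvE rmorphM; ring.
Qed.

Lemma braket_ptransY_tensv (rho : 'M[C]_(m * n)) a b f g :
  braket (ptransY rho) (tensv a f) (tensv b g) =
  braket (pmel a b rho) (map_mx Num.conj g) (map_mx Num.conj f).
Proof.
rewrite /ptransY braket_summx braketE.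
under eq_bigr => i _ do rewrite braket_summx.
under eq_bigr => i _ do under eq_bigr => j _ do rewrite braket_summx.
under eq_bigr => i _ do under eq_bigr => j _ do under eq_bigr => k _ do
  rewrite braket_summx.
under eq_bigr => i _ do under eq_bigr => j _ do under eq_bigr => k _ do
  under eq_bigr => l _ do rewrite braket_scalemx braket_delta_mx !tensvE.
under eq_bigr => i _ do rewrite exchange_big /=.
rewrite exchange_big /=; apply: eq_bigr => k _.
under eq_bigr => i _ do rewrite exchange_big /=.
rewrite exchange_big /=; apply: eq_bigr => l _.
rewrite !mxE mulr_sumr; apply: eq_bigr => i _.
rewrite mulr_sumr; apply: eq_bigr => j _.
by rewrite conjCK rmorphM; ring.
Qed.

Lemma psd_braket_tensv_kerr (rho : 'M[C]_(m * n)) a v w :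
  psd rho -> pmel a a rho *m v = 0 -> braket rho w (tensv a v) = 0.
Proof.
move=> rho_psd Av; apply: psd_braket_eq0 => //.
by rewrite braket_tensv /braket -mulmxA Av mulmx0 mxE.
Qed.

Lemma psd_braket_tensv_kerl (rho : 'M[C]_(m * n)) a v w :
  psd rho -> pmel a a rho *m v = 0 -> braket rho (tensv a v) w = 0.
Proof.
move=> rho_psd Av.
by rewrite (psd_braketC w _ rho_psd) psd_braket_tensv_kerr ?rmorph0.
Qed.

End Tensor.

Section Npt.
Variable R : realType.
Local Notation C := (R[i]).

Lemma orth_proj_ker_witness n (A B Pk : 'M[C]_n) :
  orth_proj_onto Pk (ker_of A) -> B *m Pk != 0 ->
  exists v : 'cV[C]_n, A *m v = 0 /\ B *m v != 0.
Proof.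
move=> [Pk_idem [_ kerP]] BPk_neq0.
have [j BPkj] : exists j : 'I_n, B *m (Pk *m delta_mx j (0 : 'I_1)) != 0.
  apply/existsP; apply: contraR BPk_neq0; rewrite negb_exists => /forallP BPk0.
  apply/eqP/matrixP => i j; have /negPn/eqP/matrixP/(_ i 0) := BPk0 j.
  by rewrite mulmxA -colE !mxE.
by exists (Pk *m delta_mx j 0); split=> //; apply/(kerP _); rewrite mulmxA Pk_idem.
Qed.

Lemma npt_of_pmel_ker m n (rho : 'M[C]_(m * n)) a0 a1 (v : 'cV[C]_n) :
  psd rho -> pmel a0 a0 rho *m v = 0 -> pmel a0 a1 rho *m v != 0 -> NPT rho.
Proof.
move=> rho_psd Av Bv ptrans_psd.
set u := pmel a0 a1 rho *m v.
set b := braket (pmel a0 a1 rho) u v.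
have b_gt0 : 0 < b by rewrite /b /braket -mulmxA adj_mulmx_gt0.
set q := braket (pmel a1 a1 rho) u u.
have q_ge0 : 0 <= q by rewrite /q -braket_tensv; apply: rho_psd.
have := ptrans_psd ((q + 1) *: tensv a0 (map_mx Num.conj v) +
                    (- b) *: tensv a1 (map_mx Num.conj u)).
rewrite -/(braket _ _ _) !braketDl !braketDr !braketZl !braketZr.
rewrite !braket_ptransY_tensv !map_mxCK -!braket_tensv.
rewrite !(psd_braket_tensv_kerl _ rho_psd Av) (psd_braketC (tensv a0 u) _ rho_psd).
have b_real : (- b)^* = - b by apply/conj_Creal; rewrite rpredN gtr0_real.
have q_real : (q + 1)^* = q + 1 by apply/conj_Creal/ger0_real; rewrite addr_ge0.
rewrite !braket_tensv -/b -/q (conj_Creal (gtr0_real b_gt0)) b_real q_real.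
set E := (X in 0 <= X); have -> : E = - (b ^+ 2 * (q + 2)) by rewrite /E; ring.
by rewrite oppr_ge0 lt_geF // mulr_gt0 ?exprn_gt0 ?ltr_wpDl.
Qed.

End Npt.

Section BoundedMeasurable.
Local Open Scope classical_set_scope.
Variable R : realType.
Context d (L : measurableType d) (mu : probability L R).

Definition bounded_measurable (f : L -> R) : Prop :=
  measurable_fun setT f /\ exists M : R, forall x, `|f x| <= M.

Lemma bounded_measurable_integrable f :
  bounded_measurable f -> mu.-integrable setT (EFin \o f).
Proof.
case=> mf [M fM]; apply: measurable_bounded_integrable => //.
  by move: (probability_setT mu) => /= ->; rewrite ltry.
rewrite /bounded_near; near=> K => x _ /=.
apply: le_trans (fM x) _; near: K; apply: nbhs_pinfty_ge; exact: num_real.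
Unshelve. all: by end_near. Qed.

Lemma bounded_measurable_cst c : bounded_measurable (fun=> c).
Proof. by split; [exact: measurable_cst | exists `|c|]. Qed.

Lemma bounded_measurableN f :
  bounded_measurable f -> bounded_measurable (fun x => - f x).
Proof.
case=> mf [M fM]; split; first exact: measurable_realfun.measurable_funN.
by exists M => x; rewrite normrN.
Qed.

Lemma bounded_measurableD f g : bounded_measurable f -> bounded_measurable g ->
  bounded_measurable (fun x => f x + g x).
Proof.
move=> [mf [M fM]] [mg [M' gM']].
split; first exact: measurable_realfun.measurable_funD.
by exists (M + M') => x; rewrite (le_trans (ler_normD _ _)) // lerD.
Qed.

Lemma bounded_measurableM f g : bounded_measurable f -> bounded_measurable g ->
  bounded_measurable (fun x => f x * g x).
Proof.
move=> [mf [M fM]] [mg [M' gM']].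
split; first exact: measurable_realfun.measurable_funM.
by exists (M * M') => x; rewrite normrM ler_pM.
Qed.

Lemma bounded_measurable_cstM (c : R) f :
  bounded_measurable f -> bounded_measurable (fun x => c * f x).
Proof. exact/bounded_measurableM/bounded_measurable_cst. Qed.

Lemma bounded_measurable_sum (I : Type) (r : seq I) (F : I -> L -> R) :
  (forall i, bounded_measurable (F i)) ->
  bounded_measurable (fun x => \sum_(i <- r) F i x).
Proof.
move=> Fb; elim: r => [|i r IH].
  by under eq_fun do rewrite big_nil; exact: bounded_measurable_cst.
by under eq_fun do rewrite big_cons; exact: bounded_measurableD.
Qed.

Lemma bounded_measurable_indic (E : set L) :
  measurable E -> bounded_measurable (\1_E : L -> R).
Proof.
move=> mE; split; first exact: measurable_realfun.measurable_indic.
by exists 1 => x; rewrite indicE; case: (_ \in _); rewrite ?normr1 ?normr0.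
Qed.

Lemma Rintegral_sum (I : Type) (r : seq I) (F : I -> L -> R) :
  (forall i, bounded_measurable (F i)) ->
  \int[mu]_x (\sum_(i <- r) F i x) = \sum_(i <- r) \int[mu]_x F i x.
Proof.
move=> Fb; elim: r => [|i r IH].
  rewrite big_nil; under eq_Rintegral do rewrite big_nil.
  by rewrite /Rintegral integral0.
rewrite big_cons; under eq_Rintegral do rewrite big_cons.
rewrite RintegralD ?IH //; first exact/bounded_measurable_integrable.
exact/bounded_measurable_integrable/bounded_measurable_sum.
Qed.

Definition ratio_set (X Y : L -> R) (N : nat) : set L :=
  [set x | 0 < Y x /\ N.+1%:R * Y x <= X x].

Lemma measurable_ratio_set X Y N : measurable_fun setT X -> measurable_fun setT Y ->
  measurable (ratio_set X Y N).
Proof.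
move=> mX mY.
have -> : ratio_set X Y N = (Y @^-1` `]0, +oo[) `&`
    ((fun x => X x - N.+1%:R * Y x) @^-1` `[0, +oo[).
  by apply/seteqP; split => x /=; rewrite !in_itv /= !andbT subr_ge0.
apply: measurableI; rewrite -[X in measurable X]setTI.
  by apply: mY => //; exact: measurable_itv.
have mXY : measurable_fun setT (fun x => X x - N.+1%:R * Y x).
  apply: measurable_realfun.measurable_funB => //.
  exact/measurable_realfun.measurable_funM/mY/measurable_cst.
by apply: mXY => //; exact: measurable_itv.
Qed.

Lemma Rintegral_ratio_set_cvg0 X Y :
  bounded_measurable X -> measurable_fun setT Y -> (forall x, 0 <= X x) ->
  (fun N => \int[mu]_x (X x * \1_(ratio_set X Y N) x)) @ \oo --> 0.
Proof.
move=> Xb mY X_ge0; have [mX _] := Xb.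
apply: (@fine_cvg _ _ _ _ (fun N => \int[mu]_x (X x * \1_(ratio_set X Y N) x)%:E)%E 0).
rewrite -[0%:E](integral0 mu setT).
apply: (@dominated_cvg _ _ _ mu setT measurableT
   (fun N x => (X x * \1_(ratio_set X Y N) x)%:E) (cst 0%E) (EFin \o X)).
- move=> N; apply/measurable_realfun.measurable_EFinP.
  apply: measurable_realfun.measurable_funM => //.
  exact/measurable_realfun.measurable_indic/measurable_ratio_set.
- move=> x _; apply: cvg_near_cst.
  have [Y_gt0|Y_le0] := ltP 0 (Y x); last first.
    exists 0%N => // N _ /=; rewrite indicE memNset ?mulr0 //.
    by move=> [] /lt_le_trans/(_ Y_le0); rewrite ltxx.
  exists (Num.truncn (X x / Y x)) => // N /= leN.
  rewrite indicE memNset ?mulr0 // => -[_]; apply/negP; rewrite -ltNge.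
  rewrite -ltr_pdivrMr // (lt_le_trans (truncnS_gt _)) // ler_nat.
  exact: leN.
- by [].
- exact: bounded_measurable_integrable.
- move=> N x _ /=; rewrite lee_fin normrM ger0_norm //.
  by rewrite indicE; case: (_ \in _); rewrite ?normr1 ?normr0 ?mulr1 ?mulr0.
Qed.

Lemma le_ratio_set_split X Y F N (eta : R) x :
  0 <= X x -> 0 <= Y x -> 0 < eta ->
  (forall e : R, 0 < e -> F x <= e * X x + Y x / (4 * e)) ->
  F x <= eta * (X x * \1_(ratio_set X Y N) x) +
         (1 + N.+1%:R / 4 + (4 * eta)^-1) * Y x.
Proof.
move=> X_ge0 Y_ge0 eta_gt0 FXY.
(* Off the ratio set, X < (N + 1) Y and the bound at 1 / (N + 1) is linear in Y. *)
have T_ge0 : 0 <= N.+1%:R / 4 :> R by rewrite divr_ge0.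
have XE_ge0 : 0 <= X x * \1_(ratio_set X Y N) x.
  by rewrite mulr_ge0 // indicE; case: (_ \in _).
have [Y_gt0|Y_le0] := ltP 0 (Y x); last first.
  have Y0 : Y x = 0 by apply/le_anti/andP.
  have F_le0 : F x <= 0.
    by apply: (le0_of_le_mul (c := X x)) => e /FXY; rewrite Y0 mul0r addr0.
  by rewrite Y0 mulr0 addr0 (le_trans F_le0) // mulr_ge0 // ltW.
have [xE|xE] := boolP (x \in ratio_set X Y N).
  rewrite indicE xE mulr1 (le_trans (FXY _ eta_gt0)) // lerD2l [leRHS]mulrC.
  by rewrite ler_wpM2l // lerDr addr_ge0.
rewrite indicE (negbTE xE) !mulr0 add0r.
have XY : X x < N.+1%:R * Y x.
  by rewrite ltNge; apply: contra xE => ?; rewrite inE.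
have invN_gt0 : 0 < (N.+1%:R : R)^-1 by rewrite invr_gt0.
have := FXY _ invN_gt0.
have -> : Y x / (4 * (N.+1%:R)^-1) = N.+1%:R / 4 * Y x.
  by rewrite invrM ?unitfE ?invr_eq0 ?pnatr_eq0 // invrK; field.
have : (N.+1%:R : R)^-1 * X x <= Y x by rewrite ler_pdivrMl ?ltr0n // ltW.
have : 0 <= (4 * eta)^-1 * Y x by rewrite mulr_ge0 // invr_ge0 mulr_ge0 // ltW.
have -> : (1 + N.+1%:R / 4 + (4 * eta)^-1) * Y x =
    Y x + N.+1%:R / 4 * Y x + (4 * eta)^-1 * Y x by ring.
set a := _^-1 * X x; set b := N.+1%:R / 4 * Y x; set c := (4 * eta)^-1 * Y x.
lra.
Qed.

Lemma Rintegral_le_ratio_split X Y F p N (eta : R) :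
  bounded_measurable X -> bounded_measurable Y -> bounded_measurable F ->
  bounded_measurable p -> (forall x, 0 <= X x) -> (forall x, 0 <= Y x) ->
  (forall x (e : R), 0 < e -> F x <= e * X x + Y x / (4 * e)) ->
  (forall x, 0 <= p x <= 1) -> 0 < eta ->
  \int[mu]_x (p x * F x) <=
    eta * \int[mu]_x (X x * \1_(ratio_set X Y N) x) +
    (1 + N.+1%:R / 4 + (4 * eta)^-1) * \int[mu]_x (p x * Y x).
Proof.
move=> Xb Yb Fb pb X_ge0 Y_ge0 FXY p01 eta_gt0.
set XE := fun x => X x * \1_(ratio_set X Y N) x.
set c := 1 + N.+1%:R / 4 + (4 * eta)^-1.
have XEb : bounded_measurable XE.
  exact/bounded_measurableM/bounded_measurable_indic/measurable_ratio_set/Yb.1/Xb.1.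
have pYb := bounded_measurableM pb Yb.
have pF_le x : p x * F x <= eta * XE x + c * (p x * Y x).
  have /andP[p_ge0 p_le1] := p01 x.
  have XE_ge0 : 0 <= XE x by rewrite mulr_ge0 // indicE; case: (_ \in _).
  have := ler_wpM2l p_ge0 (le_ratio_set_split N (X_ge0 x) (Y_ge0 x) eta_gt0 (FXY x)).
  move/le_trans; apply; rewrite mulrDr lerD //; last by rewrite mulrCA.
  by rewrite mulrCA ler_wpM2l ?(ltW eta_gt0) //; exact: ler_piMl.
rewrite -!RintegralZl ?bounded_measurable_integrable //.
have ZXEb := bounded_measurable_cstM eta XEb.
have ZpYb := bounded_measurable_cstM c pYb.
rewrite -RintegralD ?bounded_measurable_integrable //.
apply: le_Rintegral => //; apply: bounded_measurable_integrable.
  exact: bounded_measurableM.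
exact: bounded_measurableD.
Qed.

Lemma Rintegral_le_sublinear X Y F :
  bounded_measurable X -> bounded_measurable Y -> bounded_measurable F ->
  (forall x, 0 <= X x) -> (forall x, 0 <= Y x) ->
  (forall x (eta : R), 0 < eta -> F x <= eta * X x + Y x / (4 * eta)) ->
  forall C eps : R, 0 < eps -> exists K : R, forall (s : R) (p : L -> R), 0 < s ->
    bounded_measurable p -> (forall x, 0 <= p x <= 1) ->
    \int[mu]_x (p x * Y x) <= C * s ^+ 2 ->
    \int[mu]_x (p x * F x) <= eps * s + K * s ^+ 2.
Proof.
move=> Xb Yb Fb X_ge0 Y_ge0 FXY C eps eps_gt0.
have C1_gt0 : 0 < `|C| + 1 by rewrite ltr_pwDr.
set k := (`|C| + 1) / (2 * eps).
have k_gt0 : 0 < k by rewrite divr_gt0 ?mulr_gt0.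
have [N XE_le] : exists N,
    \int[mu]_x (X x * \1_(ratio_set X Y N) x) <= eps / (2 * k).
  have e_gt0 : 0 < eps / (2 * k) by rewrite divr_gt0 // mulr_gt0.
  have /cvgrPdist_lt/(_ _ e_gt0) [N _ XE_lt] :=
    Rintegral_ratio_set_cvg0 Xb Yb.1 X_ge0.
  exists N; have := XE_lt N (leqnn N); rewrite /= sub0r normrN.
  by move=> /ltW; apply: le_trans (ler_norm _).
set T := N.+1%:R / 4 : R.
have T_ge0 : 0 <= T by rewrite divr_ge0.
exists ((1 + T) * C) => s p s_gt0 pb p01 pY_le.
(* eta = s k: the X-part then costs s k (eps / 2k) and the Y-part C s / (4 k). *)
have eta_gt0 : 0 < s * k by rewrite mulr_gt0.
have := Rintegral_le_ratio_split N Xb Yb Fb pb X_ge0 Y_ge0 FXY p01 eta_gt0.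
have XE_part : s * k * \int[mu]_x (X x * \1_(ratio_set X Y N) x) <= s * eps / 2.
  have -> : s * eps / 2 = s * k * (eps / (2 * k)) by field; rewrite !gt_eqF.
  by apply: ler_wpM2l => //; exact: ltW.
set c := 1 + T + (4 * (s * k))^-1.
have c_ge0 : 0 <= c by rewrite addr_ge0 ?addr_ge0 // invr_ge0 mulr_ge0 // ltW.
have Y_part : c * \int[mu]_x (p x * Y x) <= (1 + T) * C * s ^+ 2 + s * (eps / 2).
  apply: le_trans (ler_wpM2l c_ge0 pY_le) _.
  have -> : c * (C * s ^+ 2) = (1 + T) * C * s ^+ 2 + s * (C / (4 * k)).
    by rewrite /c; field; rewrite !gt_eqF.
  rewrite lerD2l; apply: ler_wpM2l; first exact: ltW.
  have -> : C / (4 * k) = eps / 2 * (C / (`|C| + 1)).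
    by rewrite /k; field; rewrite !gt_eqF.
  apply: ler_piMr; first by rewrite divr_ge0 // ltW.
  by rewrite ler_pdivrMr // mul1r (le_trans (ler_norm C)) // lerDl.
lra.
Qed.

End BoundedMeasurable.

Section Density.
Variable R : realType.
Local Notation C := (R[i]).
Variable n : nat.
Implicit Types (T : 'M[C]_n) (a : 'cV[C]_n).

Lemma Re_braketE T a b : complex.Re (braket T a b) =
  \sum_k \sum_l (complex.Re ((a k 0)^* * b l 0) * complex.Re (T k l)
                - complex.Im ((a k 0)^* * b l 0) * complex.Im (T k l)).
Proof.
rewrite braketE raddf_sum; apply: eq_bigr => k _; rewrite raddf_sum.
by apply: eq_bigr => l _; case: ((a k 0)^* * b l 0) => ? ?; case: (T k l).
Qed.

Lemma density_Re_diag T k : density T -> 0 <= complex.Re (T k k) <= 1.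
Proof.
move=> [T_psd trT]; have diag_ge0 k' : 0 <= complex.Re (T k' k').
  by rewrite -braket_delta psd_Re_braket_ge0.
rewrite diag_ge0 /=; have : complex.Re (\tr T) = 1 by rewrite trT.
by rewrite /mxtrace raddf_sum (bigD1 k) //= => <-; rewrite lerDl sumr_ge0.
Qed.

Lemma density_entry_bound T k l : density T ->
  `|complex.Re (T k l)| <= 2 /\ `|complex.Im (T k l)| <= 2.
Proof.
move=> Tdens; have Re_le (z : C) : z^* * z = 1 -> complex.Re (z * T k l) <= 2.
  move=> zz; have := psd_Re_braket_le (delta_mx k 0) (z *: delta_mx l 0) Tdens.1 ltr01.
  rewrite braketZr braketZl braketZr !braket_delta mulrA zz mul1r.
  have /andP[_ ?] := density_Re_diag k Tdens; have /andP[? ?] := density_Re_diag l Tdens.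
  lra.
have unit_sqr (x y : R) : x ^+ 2 + y ^+ 2 = 1 -> (x +i* y)%C^* * (x +i* y)%C = 1.
  by move=> xy; apply/eqP; rewrite eq_complex /= -xy; apply/andP; split; apply/eqP; ring.
have /unit_sqr/Re_le h1 : (1 : R) ^+ 2 + 0 ^+ 2 = 1 by ring.
have /unit_sqr/Re_le h2 : (-1 : R) ^+ 2 + 0 ^+ 2 = 1 by ring.
have /unit_sqr/Re_le h3 : (0 : R) ^+ 2 + 1 ^+ 2 = 1 by ring.
have /unit_sqr/Re_le h4 : (0 : R) ^+ 2 + (-1) ^+ 2 = 1 by ring.
move: h1 h2 h3 h4; case: (T k l) => x y /= ? ? ? ?; rewrite !ler_norml.
by split; apply/andP; split; lra.
Qed.

End Density.

Section RankOneMeasurement.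
Variable R : realType.
Local Notation C := (R[i]).
Variables (m : nat) (b : 'cV[C]_m).
Hypothesis b_unit : adj b *m b = 1%:M.

Definition rank1_proj (a : 'I_2) : 'M[C]_m :=
  if a == ord0 then b *m adj b else 1%:M - b *m adj b.

Lemma rank1_proj_adj a : adj (rank1_proj a) = rank1_proj a.
Proof.
rewrite /rank1_proj; case: (a == ord0); first by rewrite adjmxM adjmxK.
by rewrite adjmxD adjmxN adjmx1 adjmxM adjmxK.
Qed.

Lemma rank1_proj_idem a : rank1_proj a *m rank1_proj a = rank1_proj a.
Proof.
have P_idem : b *m adj b *m (b *m adj b) = b *m adj b.
  by rewrite mulmxA -[b *m adj b *m b]mulmxA b_unit mulmx1.
rewrite /rank1_proj; case: (a == ord0) => //.
by rewrite mulmxBl mul1mx !mulmxBr mulmx1 P_idem subrr subr0.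
Qed.

Lemma rank1_proj_sum : \sum_(a < 2) rank1_proj a = 1%:M.
Proof. by rewrite big_ord_recl big_ord1 /rank1_proj /= addrC subrK. Qed.

Definition rank1_pvm : PVM R m :=
  @Build_PVM R m 2 rank1_proj rank1_proj_adj rank1_proj_idem rank1_proj_sum.

Lemma assemblage_rank1_pvm n (rho : 'M[C]_(m * n)) :
  assemblage rho (M := rank1_pvm) ord0 = pmel b b rho.
Proof.
apply/matrixP => k l; rewrite !mxE /= exchange_big /=; apply: eq_bigr => j _.
by apply: eq_bigr => i _; rewrite /rank1_proj /= !mxE big_ord1 !mxE; ring.
Qed.

End RankOneMeasurement.

Section LocalHiddenStates.
Variable R : realType.
Local Notation C := (R[i]).
Variables (m n : nat) (rho : 'M[C]_(m * n)).
Context d (L : measurableType d) (mu : probability L R).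
Context (tau : L -> 'M[C]_n) (p : forall M : PVM R m, 'I_(pvm_K M) -> L -> R).
Arguments p : clear implicits.
Hypothesis tau_density : forall x, density (tau x).
Hypothesis tau_measurable : forall k l,
  measurable_fun setT (fun x => complex.Re (tau x k l)) /\
  measurable_fun setT (fun x => complex.Im (tau x k l)).
Hypothesis p_measurable : forall (M : PVM R m) a, measurable_fun setT (p M a).
Hypothesis p_ge0 : forall M a x, 0 <= p M a x.
Hypothesis p_sum1 : forall M x, \sum_(a < pvm_K M) p M a x = 1.
Hypothesis assemblage_LHS : forall (M : PVM R m) (a : 'I_(pvm_K M)) k l,
  (complex.Re (assemblage rho a k l))%:E =
    (\int[mu]_x ((p M a x * complex.Re (tau x k l))%:E))%E /\
  (complex.Im (assemblage rho a k l))%:E =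
    (\int[mu]_x ((p M a x * complex.Im (tau x k l))%:E))%E.

Lemma bounded_measurable_tau k l :
  bounded_measurable (fun x => complex.Re (tau x k l)) /\
  bounded_measurable (fun x => complex.Im (tau x k l)).
Proof.
have [mRe mIm] := tau_measurable k l.
by split; (split; last exists 2) => // x; case: (density_entry_bound k l (tau_density x)).
Qed.

Lemma bounded_measurable_braket_term (z : C) k l : bounded_measurable
  (fun x => complex.Re z * complex.Re (tau x k l) - complex.Im z * complex.Im (tau x k l)).
Proof.
have [ReB ImB] := bounded_measurable_tau k l.
by apply/bounded_measurableD/bounded_measurableN; exact: bounded_measurable_cstM.
Qed.

Lemma bounded_measurable_Re_braket f g :
  bounded_measurable (fun x => complex.Re (braket (tau x) f g)).
Proof.
under eq_fun do rewrite Re_braketE.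
by do 2!apply: bounded_measurable_sum => ?; exact: bounded_measurable_braket_term.
Qed.

Lemma response_le1 M a x : p M a x <= 1.
Proof.
rewrite -(p_sum1 M x) (bigD1 a) //= lerDl.
by apply: sumr_ge0 => ? _; exact: p_ge0.
Qed.

Lemma bounded_measurable_response M a : bounded_measurable (p M a).
Proof.
split; first exact: p_measurable.
by exists 1 => x; rewrite ger0_norm ?response_le1.
Qed.

Lemma Rintegral_Re_braket M a f g :
  \int[mu]_x (p M a x * complex.Re (braket (tau x) f g)) =
  complex.Re (braket (assemblage rho a) f g).
Proof.
have pb := bounded_measurable_response a.
under eq_Rintegral => x _ do rewrite Re_braketE mulr_sumr.
under eq_Rintegral => x _ do under eq_bigr => k _ do rewrite mulr_sumr.
rewrite Rintegral_sum => [|k]; last first.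
  by apply: bounded_measurable_sum => l; apply: bounded_measurableM => //;
    exact: bounded_measurable_braket_term.
rewrite Re_braketE; apply: eq_bigr => k _.
rewrite Rintegral_sum => [|l]; last first.
  by apply: bounded_measurableM => //; exact: bounded_measurable_braket_term.
apply: eq_bigr => l _; set u := complex.Re _; set v := complex.Im _.
have [ReB ImB] := bounded_measurable_tau k l.
under eq_Rintegral => x _ do rewrite mulrBr mulrCA [p M a x * (v * _)]mulrCA.
have pReB := bounded_measurableM pb ReB; have pImB := bounded_measurableM pb ImB.
rewrite RintegralB ?bounded_measurable_integrable //; try exact: bounded_measurable_cstM.
rewrite !RintegralZl ?bounded_measurable_integrable //.
by have [ReE ImE] := assemblage_LHS a k l; rewrite /Rintegral -ReE -ImE.
Qed.

Lemma LHS_response (b : 'cV[C]_m) (b_unit : adj b *m b = 1%:M) :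
  exists q : L -> R, [/\ bounded_measurable q, forall x, 0 <= q x <= 1 &
    forall f g, \int[mu]_x (q x * complex.Re (braket (tau x) f g)) =
                complex.Re (braket (pmel b b rho) f g)].
Proof.
exists (p (rank1_pvm b_unit) ord0); split.
- exact: bounded_measurable_response.
- by move=> x; rewrite p_ge0 response_le1.
- by move=> f g; rewrite Rintegral_Re_braket assemblage_rank1_pvm.
Qed.

End LocalHiddenStates.

Lemma Re_rmul (R : realType) (r : R) (z : R[i]) :
  complex.Re ((r%:C)%C * z) = r * complex.Re z.
Proof. by case: z => x y /=; ring. Qed.

Section Rotation.
Variable R : realType.
Local Notation C := (R[i]).
Variables (m : nat) (a0 a1 : 'cV[C]_m) (c s : R).
Local Notation beta := ((c%:C)%C *: a0 + (s%:C)%C *: a1).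

Lemma conj_real_complex (r : R) : (r%:C)%C^* = (r%:C)%C :> C.
Proof. by apply/eqP; rewrite eq_complex /= oppr0 !eqxx. Qed.

Lemma adj_mulmx_rotation : orthonormal2 a0 a1 -> c ^+ 2 + s ^+ 2 = 1 ->
  adj beta *m beta = 1%:M.
Proof.
move=> [a00 [a11 a01]] cs.
have a10 : adj a1 *m a0 = 0.
  by rewrite -[a0]adjmxK -adjmxM a01; apply/matrixP => i j; rewrite !mxE rmorph0.
rewrite adjmxD !adjmxZ !conj_real_complex mulmxDl !mulmxDr -!scalemxAl -!scalemxAr.
rewrite a00 a11 a01 a10 !scaler0 addr0 add0r !scalerA -!rmorphM -scalerDl -rmorphD.
by rewrite -!expr2 cs rmorph1 scale1r.
Qed.

Lemma braket_pmel_rotation n (rho : 'M[C]_(m * n)) (v f : 'cV[C]_n) :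
  psd rho -> pmel a0 a0 rho *m v = 0 ->
  braket (pmel beta beta rho) f v =
  ((c * s)%:C)%C * braket (pmel a0 a1 rho) f v +
  ((s ^+ 2)%:C)%C * braket (pmel a1 a1 rho) f v.
Proof.
move=> rho_psd Av.
rewrite -braket_tensv !tensvDl !tensvZl !braketDl !braketDr !braketZl !braketZr.
rewrite !conj_real_complex !(psd_braket_tensv_kerr _ rho_psd Av) !mulr0 !add0r.
by rewrite !braket_tensv !mulrA -!rmorphM expr2.
Qed.

End Rotation.

Lemma linear_gain_dominates (R : rcfType) (b e K : R) : 0 < b ->
  exists c s : R, [/\ 0 < s, c ^+ 2 + s ^+ 2 = 1 &
    b / 4 * s + K * s ^+ 2 < c * s * b + s ^+ 2 * e].
Proof.
move=> b_gt0; set Q : R := `|e| + `|K| + 1.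
have Q_gt0 : 0 < Q by rewrite ltr_pwDr // addr_ge0.
set s : R := Num.min (1 / 2) (b / (4 * Q)).
have s_gt0 : 0 < s by rewrite lt_min !divr_gt0 ?mulr_gt0.
have s_le : s <= 1 / 2 by rewrite ge_min lexx.
have sQ : 4 * (s * `|e|) + 4 * (s * `|K|) + 4 * s <= b.
  have -> : 4 * (s * `|e|) + 4 * (s * `|K|) + 4 * s = s * (4 * Q) by rewrite /Q; ring.
  by rewrite -ler_pdivlMr ?mulr_gt0 // ge_min lexx orbT.
clearbody s; set c : R := Num.sqrt (1 - s ^+ 2).
have c2 : c ^+ 2 = 1 - s ^+ 2 by rewrite sqr_sqrtr // subr_ge0; nra.
have c_ge0 : 0 <= c := sqrtr_ge0 _.
have c_ge : 1 / 2 <= c by nra.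
exists c, s; split=> //; first by rewrite c2 subrK.
have -> : b / 4 * s + K * s ^+ 2 = s * (b / 4 + s * K) by ring.
have -> : c * s * b + s ^+ 2 * e = s * (c * b + s * e) by ring.
rewrite ltr_pM2l //.
have := ler_wpM2l (ltW s_gt0) (ler_norm K).
have := ler_wpM2l (ltW s_gt0) (ler_norm (- e)); rewrite normrN.
have := ler_wpM2r (ltW b_gt0) c_ge.
lra.
Qed.

Lemma not_LHS_of_pmel_ker (R : realType) m n (rho : 'M[R[i]]_(m * n))
    (a0 a1 : 'cV[R[i]]_m) (v : 'cV[R[i]]_n) :
  psd rho -> orthonormal2 a0 a1 ->
  pmel a0 a0 rho *m v = 0 -> pmel a0 a1 rho *m v != 0 -> ~ has_LHS_model rho.
Proof.
move=> rho_psd a01 Av Bv [d [L [mu [tau [p [dens [meas [pm [p0 [psum sig]]]]]]]]]].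
have tau_psd x := (dens x).1.
set u := pmel a0 a1 rho *m v.
set b := complex.Re (braket (pmel a0 a1 rho) u v).
have b_gt0 : 0 < b.
  have : 0 < braket (pmel a0 a1 rho) u v by rewrite /braket -mulmxA adj_mulmx_gt0.
  by rewrite ltcE => /andP[].
have [K HK] := Rintegral_le_sublinear mu
  (bounded_measurable_Re_braket dens meas u u) (bounded_measurable_Re_braket dens meas v v)
  (bounded_measurable_Re_braket dens meas u v)
  (fun x => psd_Re_braket_ge0 u (tau_psd x)) (fun x => psd_Re_braket_ge0 v (tau_psd x))
  (fun x eta => psd_Re_braket_le u v (tau_psd x))
  (complex.Re (braket (pmel a1 a1 rho) v v)) (divr_gt0 b_gt0 (ltr0n _ 4)).
have [c [s [s_gt0 cs gain]]] :=
  linear_gain_dominates (complex.Re (braket (pmel a1 a1 rho) u v)) K b_gt0.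
have [q [qb q01 q_int]] := LHS_response dens meas pm p0 psum sig (adj_mulmx_rotation a01 cs).
have Bvv : braket (pmel a0 a1 rho) v v = 0.
  by rewrite -braket_tensv psd_braket_tensv_kerl.
have := HK s q s_gt0 qb q01.
rewrite !q_int !braket_pmel_rotation // Bvv mulr0 add0r !raddfD /= !Re_rmul.
rewrite [_ * s ^+ 2]mulrC lexx => /(_ isT) /(lt_le_trans gain).
by rewrite ltxx.
Qed.

Unset Implicit Arguments.
Theorem proposition1 (R : realType) (m n : nat) (hm : (2 <= m)%N)
  (rho : 'M[R[i]]_(m * n)) (hrho : density rho)
  (a0 a1 : 'cV[R[i]]_m) (ha : orthonormal2 a0 a1) :
  let A := pmel a0 a0 rho in
  let B := pmel a0 a1 rho in
  let D := pmel a1 a1 rho in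
  A != 0 ->
  (exists v : 'cV[R[i]]_n, v != 0 /\ ker_of A v) ->
  (exists Ps Pk : 'M[R[i]]_n,
      orth_proj_onto Ps (range_of A) /\ orth_proj_onto Pk (ker_of A) /\
      Ps *m B *m Pk != 0) ->
  NPT rho /\ proj_steerable rho.
Proof.
(* hm and the hypotheses A <> 0, Ker A <> 0 are implied by the others. *)
move=> A B D _ _ [Ps [Pk [_ [Pk_proj PsBPk]]]].
have BPk : B *m Pk != 0.
  by apply: contraNneq PsBPk => BPk0; rewrite -mulmxA BPk0 mulmx0.
have [v [Av Bv]] := orth_proj_ker_witness Pk_proj BPk.
split; first exact: npt_of_pmel_ker hrho.1 Av Bv.
exact: not_LHS_of_pmel_ker hrho.1 ha Av Bv.
Qed.
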